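(* Let $G$ be a connected graph with $n\ge 2$ vertices, $m$ edges and Randi\'c index $R=R(G)$. Then $$EE(G) > e^{m/R} + (n-1) - \frac{m}{R}.$$
   Context: All graphs are finite, simple and undirected. For a graph $G$ with adjacency matrix $A(G)$ having eigenvalues $\lambda_1\ge\lambda_2\ge\cdots\ge\lambda_n$, the Estrada index is $EE(G)=\sum_{i=1}^n e^{\lambda_i}$. Writing $d(i)$ for the degree of vertex $i$ and $\mathcal{E}(G)$ for the edge set, the general Randi\'c index is $R_\alpha(G)=\sum_{ij\in\mathcal{E}(G)}(d(i)d(j))^\alpha$ for real $\alpha$, and the Randi\'c index is $R=R_{-1/2}(G)=\sum_{ij\in\mathcal{E}(G)}(d(i)d(j))^{-1/2}$. *)

From Stdlib Require Import Reals Lra Relations.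
Open Scope R_scope.

Fixpoint fsum (n : nat) (f : nat -> R) : R :=
  match n with
  | O => 0
  | S k => fsum k f + f k
  end.

Definition simple_graph (n : nat) (adj : nat -> nat -> bool) : Prop :=
  (forall i j, (i < n)%nat -> (j < n)%nat -> adj i j = adj j i) /\
  (forall i, (i < n)%nat -> adj i i = false).

Definition edge (n : nat) (adj : nat -> nat -> bool) (i j : nat) : Prop :=
  (i < n)%nat /\ (j < n)%nat /\ adj i j = true.

Definition connected (n : nat) (adj : nat -> nat -> bool) : Prop :=
  forall i j, (i < n)%nat -> (j < n)%nat ->
    clos_refl_trans nat (edge n adj) i j.

Definition Aent (adj : nat -> nat -> bool) (i j : nat) : R :=
  if adj i j then 1 else 0.

Definition deg (n : nat) (adj : nat -> nat -> bool) (i : nat) : R :=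
  fsum n (fun j => Aent adj i j).

Definition num_edges (n : nat) (adj : nat -> nat -> bool) : R :=
  fsum n (fun i => fsum i (fun j => Aent adj j i)).

Definition randic_gen (alpha : R) (n : nat) (adj : nat -> nat -> bool) : R :=
  fsum n (fun i => fsum i (fun j =>
    if adj j i then Rpower (deg n adj i * deg n adj j) alpha else 0)).

Definition randic (n : nat) (adj : nat -> nat -> bool) : R :=
  randic_gen (-1/2) n adj.

(* lam 0, ..., lam (n-1) are the eigenvalues (with multiplicity) of the
   symmetric matrix A(G): there is an orthonormal basis v 0, ..., v (n-1)
   of R^n with A v_k = lam_k v_k (spectral decomposition). *)
Definition is_adj_spectrum (n : nat) (adj : nat -> nat -> bool)
    (lam : nat -> R) : Prop :=
  exists v : nat -> nat -> R,
    (forall k l, (k < n)%nat -> (l < n)%nat ->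
       fsum n (fun i => v k i * v l i) = if Nat.eqb k l then 1 else 0) /\
    (forall k i, (k < n)%nat -> (i < n)%nat ->
       fsum n (fun j => Aent adj i j * v k j) = lam k * v k i).

Definition estrada (n : nat) (lam : nat -> R) : R :=
  fsum n (fun k => exp (lam k)).

From Stdlib Require Import Reals Lra Lia Psatz Relations Classical.
Open Scope R_scope.

(* Since tr A = 0, EE(G) = n + sum_k (e^(lam_k) - 1 - lam_k), a sum of
   nonnegative terms.  The Rayleigh quotient of the vector (sqrt d(i))_i,
   combined with the Cauchy-Schwarz inequality m^2 <= R * sum_(ij in E)
   sqrt (d(i) d(j)), gives lam_1 >= m/R > 0.  As e^x - x is increasing on
   [0, +oo), the term of lam_1 is at least e^(m/R) - 1 - m/R; and since the
   eigenvalues sum to 0, some other eigenvalue is negative, which makes its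
   term positive and the inequality strict. *)

Lemma fsum_ext n f g :
  (forall i, (i < n)%nat -> f i = g i) -> fsum n f = fsum n g.
Proof.
  induction n as [|n IH]; intros H; simpl; auto.
  rewrite IH by (intros; apply H; lia). rewrite H by lia. reflexivity.
Qed.

Lemma fsum_plus n f g : fsum n (fun i => f i + g i) = fsum n f + fsum n g.
Proof. induction n; simpl; [lra | rewrite IHn; lra]. Qed.

Lemma fsum_minus n f g : fsum n (fun i => f i - g i) = fsum n f - fsum n g.
Proof. induction n; simpl; [lra | rewrite IHn; lra]. Qed.

Lemma fsum_scal_l n c f : fsum n (fun i => c * f i) = c * fsum n f.
Proof. induction n; simpl; [lra | rewrite IHn; lra]. Qed.

Lemma fsum_scal_r n c f : fsum n (fun i => f i * c) = fsum n f * c.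
Proof. induction n; simpl; [lra | rewrite IHn; lra]. Qed.

Lemma fsum_const n c : fsum n (fun _ => c) = INR n * c.
Proof. induction n; simpl fsum; [simpl; lra | rewrite IHn, S_INR; lra]. Qed.

Lemma fsum_le n f g :
  (forall i, (i < n)%nat -> f i <= g i) -> fsum n f <= fsum n g.
Proof.
  induction n as [|n IH]; intros H; simpl; [lra |].
  assert (fsum n f <= fsum n g) by (apply IH; intros; apply H; lia).
  specialize (H n ltac:(lia)). lra.
Qed.

Lemma fsum_nonneg n f : (forall i, (i < n)%nat -> 0 <= f i) -> 0 <= fsum n f.
Proof.
  intros H. replace 0 with (fsum n (fun _ => 0)) by (rewrite fsum_const; ring).
  apply fsum_le. exact H.
Qed.

Lemma fsum_swap n m F :
  fsum n (fun i => fsum m (fun k => F i k)) =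
  fsum m (fun k => fsum n (fun i => F i k)).
Proof.
  induction n as [|n IH]; simpl.
  - rewrite fsum_const. ring.
  - rewrite IH, <- fsum_plus. reflexivity.
Qed.

Lemma fsum_delta n i y : (i < n)%nat ->
  fsum n (fun j => (if Nat.eqb i j then 1 else 0) * y j) = y i.
Proof.
  induction n as [|n IH]; intros Hi; [lia |]. simpl.
  destruct (Nat.eq_dec i n) as [-> | ne].
  - rewrite Nat.eqb_refl, (fsum_ext n _ (fun _ => 0)).
    + rewrite fsum_const. ring.
    + intros j Hj. destruct (Nat.eqb_spec n j); [lia | ring].
  - rewrite IH by lia. destruct (Nat.eqb_spec i n); [lia | ring].
Qed.

Lemma fsum_ge_term n f p :
  (forall i, (i < n)%nat -> 0 <= f i) -> (p < n)%nat -> f p <= fsum n f.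
Proof.
  induction n as [|n IH]; intros H Hp; [lia |]. simpl.
  destruct (Nat.eq_dec p n) as [-> | ne].
  - assert (0 <= fsum n f) by (apply fsum_nonneg; intros; apply H; lia). lra.
  - assert (f p <= fsum n f) by (apply IH; [intros; apply H; lia | lia]).
    specialize (H n ltac:(lia)). lra.
Qed.

Lemma fsum_ge_two_terms n f p q :
  (forall i, (i < n)%nat -> 0 <= f i) -> (p < n)%nat -> (q < n)%nat -> p <> q ->
  f p + f q <= fsum n f.
Proof.
  induction n as [|n IH]; intros H Hp Hq Hpq; [lia |]. simpl.
  assert (0 <= f n) by (apply H; lia).
  destruct (Nat.eq_dec p n) as [-> | ne].
  - assert (f q <= fsum n f) by (apply fsum_ge_term; [intros; apply H; lia | lia]). lra.
  - destruct (Nat.eq_dec q n) as [-> | ne'].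
    + assert (f p <= fsum n f) by (apply fsum_ge_term; [intros; apply H; lia | lia]). lra.
    + assert (f p + f q <= fsum n f) by (apply IH; auto; try lia; intros; apply H; lia).
      lra.
Qed.

Lemma fsum_symmetric n F :
  (forall i j, (i < n)%nat -> (j < n)%nat -> F i j = F j i) ->
  (forall i, (i < n)%nat -> F i i = 0) ->
  fsum n (fun i => fsum n (fun j => F i j)) = 2 * fsum n (fun i => fsum i (fun j => F i j)).
Proof.
  induction n as [|n IH]; intros Hsym Hdiag; simpl; [lra |].
  rewrite fsum_plus, IH by (intros; auto with arith).
  rewrite (fsum_ext n (fun i => F i n) (fun i => F n i)) by (intros; apply Hsym; lia).
  rewrite Hdiag by lia. lra.
Qed.

Lemma exists_argmax n (f : nat -> R) : (1 <= n)%nat ->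
  exists p, (p < n)%nat /\ forall k, (k < n)%nat -> f k <= f p.
Proof.
  induction n as [|n IH]; intros H; [lia |].
  destruct n as [|n].
  - exists 0%nat. split; [lia |]. intros k Hk. replace k with 0%nat by lia. lra.
  - destruct IH as [p [Hp Hmax]]; [lia |].
    destruct (Rle_dec (f (S n)) (f p)).
    + exists p. split; [lia |]. intros k Hk.
      destruct (Nat.eq_dec k (S n)); [subst; auto | apply Hmax; lia].
    + exists (S n). split; [lia |]. intros k Hk.
      destruct (Nat.eq_dec k (S n)); [subst; lra |].
      specialize (Hmax k ltac:(lia)). lra.
Qed.

Definition dot (n : nat) (x y : nat -> R) : R := fsum n (fun i => x i * y i).

Lemma dot_comm n x y : dot n x y = dot n y x.
Proof. apply fsum_ext. intros; ring. Qed.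

Lemma dot_unit_l n i y : (i < n)%nat ->
  dot n (fun j => if Nat.eqb i j then 1 else 0) y = y i.
Proof. apply fsum_delta. Qed.

Definition mulv (n : nat) (A : nat -> nat -> R) (x : nat -> R) (i : nat) : R :=
  fsum n (fun j => A i j * x j).

Module OrthonormalBasis.
From mathcomp Require Import all_boot all_algebra Rstruct.
Import GRing.Theory.
Local Open Scope ring_scope.

Lemma fsum_big n (f : nat -> R) : fsum n f = (\sum_(i < n) f i)%R.
Proof.
elim: n => [|n IH] /=; first by rewrite big_ord0.
by rewrite big_ord_recr /= IH.
Qed.

Lemma eqb_ord {n} (i j : 'I_n) : Nat.eqb i j = (i == j).
Proof. by apply/idP/eqP => [/Nat.eqb_spec/ord_inj | ->]; rewrite ?Nat.eqb_refl. Qed.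

(* Reopened so that the numerals of the statement are Stdlib's reals. *)
Local Open Scope R_scope.

(* n orthonormal rows form an orthogonal matrix V, whose columns are then
   orthonormal as well: V V^T = 1 implies V^T V = 1. *)
Lemma columns_orthonormal n (v : nat -> nat -> R) :
  (forall k l, (k < n)%coq_nat -> (l < n)%coq_nat ->
     dot n (v k) (v l) = if Nat.eqb k l then 1 else 0) ->
  forall i j, (i < n)%coq_nat -> (j < n)%coq_nat ->
    fsum n (fun k => v k i * v k j) = if Nat.eqb i j then 1 else 0.
Proof.
move=> rows i j /ltP Hi /ltP Hj.
pose V : 'M[R]_n := \matrix_(k, i) v k i.
have VVT : V *m V^T = 1%:M.
  apply/matrixP => k l; rewrite !mxE.
  have -> : (k == l)%:R = (if Nat.eqb k l then 1 else 0) :> R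
    by rewrite eqb_ord; case: (k == l).
  rewrite -rows; try exact/ltP.
  by rewrite /dot fsum_big; apply: eq_bigr => s _; rewrite !mxE.
pose i0 : 'I_n := Ordinal Hi; pose j0 : 'I_n := Ordinal Hj.
have := congr1 (fun M : 'M[R]_n => M i0 j0) (mulmx1C VVT).
rewrite !mxE.
have -> : (i0 == j0)%:R = (if Nat.eqb i j then 1 else 0) :> R
  by rewrite -(eqb_ord i0 j0); case: (Nat.eqb i j).
move=> <-.
by rewrite fsum_big; apply: eq_bigr => s _; rewrite !mxE.
Qed.
End OrthonormalBasis.

Section SpectralDecomposition.

Variables (n : nat) (A : nat -> nat -> R) (lam : nat -> R) (v : nat -> nat -> R).

Hypothesis A_sym : forall i j, (i < n)%nat -> (j < n)%nat -> A i j = A j i.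
Hypothesis v_orthonormal : forall k l, (k < n)%nat -> (l < n)%nat ->
  dot n (v k) (v l) = if Nat.eqb k l then 1 else 0.
Hypothesis v_eigen : forall k i, (k < n)%nat -> (i < n)%nat ->
  mulv n A (v k) i = lam k * v k i.

Lemma parseval x y :
  dot n x y = fsum n (fun k => dot n (v k) x * dot n (v k) y).
Proof.
  unfold dot. symmetry.
  rewrite (fsum_ext n _
             (fun k => fsum n (fun i => fsum n (fun j => x i * y j * (v k i * v k j))))).
  2:{ intros k Hk. rewrite <- fsum_scal_r. apply fsum_ext. intros i Hi.
      rewrite <- fsum_scal_l. apply fsum_ext. intros j Hj. ring. }
  rewrite fsum_swap. apply fsum_ext. intros i Hi.
  rewrite fsum_swap.
  rewrite (fsum_ext n _ (fun j => (if Nat.eqb i j then 1 else 0) * (x i * y j))).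
  - rewrite fsum_delta by exact Hi. reflexivity.
  - intros j Hj. rewrite fsum_scal_l, OrthonormalBasis.columns_orthonormal by auto.
    destruct (Nat.eqb i j); ring.
Qed.

Lemma dot_eigvec_mulv x k : (k < n)%nat ->
  dot n (v k) (mulv n A x) = lam k * dot n (v k) x.
Proof.
  intros Hk. unfold dot, mulv.
  rewrite (fsum_ext n _ (fun i => fsum n (fun j => v k i * A i j * x j))).
  2:{ intros i Hi. rewrite <- fsum_scal_l. apply fsum_ext. intros; ring. }
  rewrite fsum_swap, <- fsum_scal_l. apply fsum_ext. intros j Hj.
  rewrite fsum_scal_r, <- Rmult_assoc, <- v_eigen by auto. unfold mulv. f_equal.
  apply fsum_ext. intros i Hi. rewrite A_sym by auto. ring.
Qed.

Lemma rayleigh_le x p :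
  (p < n)%nat -> (forall k, (k < n)%nat -> lam k <= lam p) ->
  dot n x (mulv n A x) <= lam p * dot n x x.
Proof.
  intros Hp Hmax. rewrite !parseval, <- fsum_scal_l.
  apply fsum_le. intros k Hk. rewrite dot_eigvec_mulv by exact Hk.
  specialize (Hmax k Hk). pose proof (Rle_0_sqr (dot n (v k) x)). unfold Rsqr in *. nra.
Qed.

Lemma sum_eigenvalues : fsum n lam = fsum n (fun i => A i i).
Proof.
  pose (e i j := if Nat.eqb i j then 1 else 0).
  transitivity (fsum n (fun i => dot n (e i) (A i))).
  2:{ apply fsum_ext. intros i Hi. apply dot_unit_l. exact Hi. }
  rewrite (fsum_ext n (fun i => dot n (e i) (A i))
             (fun i => fsum n (fun k => v k i * (lam k * v k i)))).
  2:{ intros i Hi. rewrite parseval. apply fsum_ext. intros k Hk.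
      rewrite <- v_eigen by auto. unfold e. rewrite dot_comm, dot_unit_l by auto.
      f_equal.
      apply fsum_ext. intros; ring. }
  rewrite fsum_swap. apply fsum_ext. intros k Hk.
  rewrite (fsum_ext n _ (fun i => v k i * v k i * lam k)) by (intros; ring).
  rewrite fsum_scal_r. fold (dot n (v k) (v k)).
  rewrite v_orthonormal, Nat.eqb_refl by exact Hk. ring.
Qed.

End SpectralDecomposition.

Definition edge_sum (n : nat) (adj : nat -> nat -> bool) (F : nat -> nat -> R) : R :=
  fsum n (fun i => fsum i (fun j => if adj j i then F i j else 0)).

Lemma edge_sum_plus n adj F G :
  edge_sum n adj (fun i j => F i j + G i j) = edge_sum n adj F + edge_sum n adj G.
Proof.
  unfold edge_sum. rewrite <- fsum_plus. apply fsum_ext. intros i Hi.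
  rewrite <- fsum_plus. apply fsum_ext. intros j Hj. destruct (adj j i); ring.
Qed.

Lemma edge_sum_scal_r n adj c F :
  edge_sum n adj (fun i j => F i j * c) = edge_sum n adj F * c.
Proof.
  unfold edge_sum. rewrite <- fsum_scal_r. apply fsum_ext. intros i Hi.
  rewrite <- fsum_scal_r. apply fsum_ext. intros j Hj. destruct (adj j i); ring.
Qed.

Lemma edge_sum_nonneg n adj F :
  (forall i j, (j < i)%nat -> (i < n)%nat -> adj j i = true -> 0 <= F i j) ->
  0 <= edge_sum n adj F.
Proof.
  intros H. apply fsum_nonneg. intros i Hi. apply fsum_nonneg. intros j Hj.
  destruct (adj j i) eqn:E; [apply H; auto | lra].
Qed.

Lemma num_edges_edge_sum n adj : num_edges n adj = edge_sum n adj (fun _ _ => 1).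
Proof. reflexivity. Qed.

Lemma randic_edge_sum n adj :
  randic n adj =
  edge_sum n adj (fun i j => Rpower (deg n adj i * deg n adj j) (-1/2)).
Proof. reflexivity. Qed.

Lemma rt_refl_or_edge n adj i j : clos_refl_trans nat (edge n adj) i j ->
  i = j \/ exists a b, edge n adj a b.
Proof.
  induction 1 as [x y Hxy | x | x y z _ IH1 _ IH2]; auto.
  - right. eauto.
  - destruct IH1 as [-> | ?]; auto.
Qed.

Lemma quadratic_discriminant a b c : 0 < b ->
  (forall t, 0 <= a * (t * t) - 2 * b * t + c) -> 0 < a /\ b * b <= a * c.
Proof.
  intros Hb H.
  assert (Ha : 0 < a).
  { specialize (H ((c + 1) / (2 * b))).
    set (t := (c + 1) / (2 * b)) in H.
    replace (2 * b * t) with (c + 1) in H by (unfold t; field; lra).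
    pose proof (Rle_0_sqr t). unfold Rsqr in *.
    destruct (Rlt_le_dec 0 a); [assumption | nra]. }
  split; [exact Ha |].
  specialize (H (b / a)).
  replace (a * (b / a * (b / a)) - 2 * b * (b / a) + c) with (c - b * b / a) in H
    by (field; lra).
  replace (b * b) with (a * (b * b / a)) by (field; lra).
  apply Rmult_le_compat_l; lra.
Qed.

Lemma rpower_neg_half_mul_sqrt w : 0 < w -> Rpower w (-1/2) * sqrt w = 1.
Proof.
  intros Hw. rewrite <- Rpower_sqrt, <- Rpower_plus by exact Hw.
  replace (-1/2 + /2) with 0 by field. apply Rpower_O. exact Hw.
Qed.

Section SimpleGraph.

Variables (n : nat) (adj : nat -> nat -> bool).
Hypothesis G_simple : simple_graph n adj.

Let d := deg n adj.

Lemma Aent_sym i j : (i < n)%nat -> (j < n)%nat -> Aent adj i j = Aent adj j i.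
Proof. intros Hi Hj. unfold Aent. rewrite (proj1 G_simple i j Hi Hj). reflexivity. Qed.

Lemma adj_quadratic_form F :
  (forall i j, (i < n)%nat -> (j < n)%nat -> F i j = F j i) ->
  fsum n (fun i => mulv n (Aent adj) (F i) i) = 2 * edge_sum n adj F.
Proof.
  intros HF. unfold mulv, edge_sum.
  rewrite fsum_symmetric.
  - f_equal. apply fsum_ext. intros i Hi. apply fsum_ext. intros j Hj.
    rewrite Aent_sym by lia. unfold Aent. destruct (adj j i); ring.
  - intros i j Hi Hj. rewrite Aent_sym, HF by auto. reflexivity.
  - intros i Hi. unfold Aent. rewrite (proj2 G_simple i Hi). ring.
Qed.

Lemma sum_deg : fsum n d = 2 * num_edges n adj.
Proof.
  rewrite num_edges_edge_sum, <- adj_quadratic_form by reflexivity.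
  apply fsum_ext. intros i Hi. unfold d, deg, mulv. apply fsum_ext. intros; ring.
Qed.

Lemma deg_nonneg i : 0 <= d i.
Proof. apply fsum_nonneg. intros j _. unfold Aent. destruct (adj i j); lra. Qed.

Lemma deg_ge1 i j : (i < n)%nat -> (j < n)%nat -> adj i j = true -> 1 <= d i.
Proof.
  intros Hi Hj Hij. unfold d, deg.
  replace 1 with (Aent adj i j) by (unfold Aent; rewrite Hij; reflexivity).
  apply fsum_ge_term; auto. intros k _. unfold Aent. destruct (adj i k); lra.
Qed.

Lemma num_edges_pos : (2 <= n)%nat -> connected n adj -> 0 < num_edges n adj.
Proof.
  intros Hn Hconn.
  destruct (rt_refl_or_edge n adj 0 1 (Hconn 0%nat 1%nat ltac:(lia) ltac:(lia)))
    as [H01 | [a [b [Ha [Hb Hab]]]]]; [lia |].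
  assert (1 <= d a) by (apply (deg_ge1 a b); auto).
  assert (d a <= fsum n d) by (apply fsum_ge_term; auto; intros; apply deg_nonneg).
  pose proof sum_deg. lra.
Qed.

(* Each edge contributes (p t - 1)^2 / p >= 0 with p = (d(i) d(j))^(-1/2). *)
Lemma randic_cauchy_schwarz :
  0 < num_edges n adj ->
  0 < randic n adj /\
  num_edges n adj * num_edges n adj <=
    randic n adj * edge_sum n adj (fun i j => sqrt (d i) * sqrt (d j)).
Proof.
  intros Hm. apply quadratic_discriminant; [exact Hm |]. intros t.
  replace (randic n adj * (t * t) - 2 * num_edges n adj * t +
           edge_sum n adj (fun i j => sqrt (d i) * sqrt (d j)))
    with (edge_sum n adj (fun i j => Rpower (d i * d j) (-1/2) * (t * t) +
                                    1 * (-2 * t) + sqrt (d i) * sqrt (d j) * 1)).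
  2:{ rewrite !edge_sum_plus, !edge_sum_scal_r, <- randic_edge_sum,
        <- num_edges_edge_sum. ring. }
  apply edge_sum_nonneg. intros i j Hji Hi Hadj.
  assert (1 <= d i) by (apply (deg_ge1 i j); try lia; rewrite (proj1 G_simple) by lia; auto).
  assert (1 <= d j) by (apply (deg_ge1 j i); auto; lia).
  rewrite <- sqrt_mult by lra. fold d.
  assert (Hw : 0 < d i * d j) by nra.
  pose proof (rpower_neg_half_mul_sqrt _ Hw) as Hps.
  set (p := Rpower (d i * d j) (-1/2)) in *.
  assert (0 < p) by (unfold p, Rpower; apply exp_pos).
  apply Rmult_le_reg_l with p; [assumption |].
  replace (p * (p * (t * t) + 1 * (-2 * t) + sqrt (d i * d j) * 1))
    with ((p * t - 1) * (p * t - 1) + (p * sqrt (d i * d j) - 1)) by ring.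
  rewrite Hps. pose proof (Rle_0_sqr (p * t - 1)). unfold Rsqr in *. lra.
Qed.

Lemma max_eigenvalue_ge_edges_div_randic lam p :
  (2 <= n)%nat -> connected n adj -> is_adj_spectrum n adj lam ->
  (p < n)%nat -> (forall k, (k < n)%nat -> lam k <= lam p) ->
  num_edges n adj / randic n adj <= lam p.
Proof.
  intros Hn Hconn [v [Horth Heig]] Hp Hmax.
  set (m := num_edges n adj).
  set (x i := sqrt (d i)).
  set (S := edge_sum n adj (fun i j => x i * x j)).
  assert (Hm : 0 < m) by (apply num_edges_pos; auto).
  destruct (randic_cauchy_schwarz Hm) as [HR HCS].
  change (m * m <= randic n adj * S) in HCS.
  assert (HxAx : dot n x (mulv n (Aent adj) x) = 2 * S).
  { unfold S. rewrite <- adj_quadratic_form by (intros; ring).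
    unfold dot, mulv. apply fsum_ext. intros i Hi.
    rewrite <- fsum_scal_l. apply fsum_ext. intros; ring. }
  assert (Hxx : dot n x x = 2 * m).
  { unfold m. rewrite <- sum_deg. apply fsum_ext. intros i Hi.
    apply sqrt_sqrt, deg_nonneg. }
  pose proof (rayleigh_le n (Aent adj) lam v Aent_sym Horth Heig x p Hp Hmax) as Hray.
  rewrite HxAx, Hxx in Hray.
  apply Rmult_le_reg_r with (randic n adj * m); [apply Rmult_lt_0_compat; lra |].
  replace (m / randic n adj * (randic n adj * m)) with (m * m) by (field; lra).
  replace (lam p * (randic n adj * m)) with (randic n adj * (lam p * m)) by ring.
  assert (randic n adj * S <= randic n adj * (lam p * m))
    by (apply Rmult_le_compat_l; lra).
  lra.
Qed.

Lemma trace_adj_zero lam :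
  is_adj_spectrum n adj lam -> fsum n lam = 0.
Proof.
  intros [v [Horth Heig]].
  rewrite (sum_eigenvalues n (Aent adj) lam v Horth Heig).
  rewrite (fsum_ext n _ (fun _ => 0)); [rewrite fsum_const; ring |].
  intros i Hi. unfold Aent. rewrite (proj2 G_simple i Hi). reflexivity.
Qed.

End SimpleGraph.

Lemma exp_sub_id_le a b : 0 <= a -> a <= b -> exp a - a <= exp b - b.
Proof.
  intros Ha Hab.
  assert (E : exp b = exp a * exp (b - a)) by (rewrite <- exp_plus; f_equal; ring).
  pose proof (exp_ineq1_le (b - a)). pose proof (exp_ineq1_le a).
  pose proof (exp_pos a). nra.
Qed.

Lemma sum_exp_gt n lam p t :
  (p < n)%nat -> fsum n lam = 0 -> 0 < t -> t <= lam p ->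
  fsum n (fun k => exp (lam k)) > exp t + (INR n - 1) - t.
Proof.
  intros Hp Hsum Ht Htp.
  set (g k := exp (lam k) - (1 + lam k)).
  assert (Hg : forall k, 0 <= g k)
    by (intros k; unfold g; pose proof (exp_ineq1_le (lam k)); lra).
  assert (Hsumg : fsum n g = fsum n (fun k => exp (lam k)) - INR n).
  { unfold g. rewrite fsum_minus, fsum_plus, Hsum, fsum_const. ring. }
  assert (Hneg : exists q, (q < n)%nat /\ lam q < 0).
  { apply NNPP. intros Hno.
    assert (lam p <= fsum n lam).
    { apply fsum_ge_term; auto. intros i Hi.
      apply Rnot_lt_le. intros Hlt. apply Hno. eauto. }
    lra. }
  destruct Hneg as [q [Hq Hlamq]].
  assert (g p + g q <= fsum n g)
    by (apply fsum_ge_two_terms; auto; intros ->; lra).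
  assert (0 < g q) by (unfold g; pose proof (exp_ineq1 (lam q) ltac:(lra)); lra).
  pose proof (exp_sub_id_le t (lam p) ltac:(lra) Htp).
  unfold g in *. lra.
Qed.

Theorem mainTheorem1 (n : nat) (adj : nat -> nat -> bool) (lam : nat -> R) :
  (2 <= n)%nat ->
  simple_graph n adj ->
  connected n adj ->
  is_adj_spectrum n adj lam ->
  estrada n lam >
    exp (num_edges n adj / randic n adj) + (INR n - 1)
      - num_edges n adj / randic n adj.
Proof.
  intros Hn Hsimple Hconn Hspec.
  destruct (exists_argmax n lam ltac:(lia)) as [p [Hp Hmax]].
  assert (Hm : 0 < num_edges n adj) by (apply num_edges_pos; auto).
  destruct (randic_cauchy_schwarz n adj Hsimple Hm) as [HR _].
  apply (sum_exp_gt n lam p).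
  - exact Hp.
  - apply (trace_adj_zero n adj Hsimple lam Hspec).
  - apply Rdiv_lt_0_compat; assumption.
  - apply (max_eigenvalue_ge_edges_div_randic n adj Hsimple lam p Hn Hconn Hspec Hp Hmax).
Qed.
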